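(* Let $N\geq 3$ be a prime integer and let $q\in\mathbb{C}$ satisfy $q^N=1$, $q\neq 1$. Let $X\subset\mathbb{R}^{N-1}$ be a nonempty convex subspace. Then the index map $\eta:(C^q_*(X),\partial)\to(\mathbb{Z}[q],[*]_q)$ induces an isomorphism in amplitude homology; that is, for every amplitude $1\leq m\leq N-1$ and every degree $n\in\mathbb{Z}$, the induced map $H_{m,n}(C^q_*(X))\to H_{m,n}(\mathbb{Z}[q],[*]_q)$ is an isomorphism of $\mathbb{Z}[q]$-modules.
   Context: $q$-numbers: $[k]_q=1+q+\cdots+q^{k-1}$ for $k\geq 1$. Singular $q$-chains: for a topological space $X$, $C^q_n(X)$ is the free $\mathbb{Z}[q]$-module with basis the continuous maps $\sigma:\Delta^n\to X$ (singular $n$-simplices), where $\Delta^n\subset\mathbb{R}^{n+1}$ is the convex hull of the standard basis $e_0,\dots,e_n$; $C^q_n(X)=0$ for $n<0$. For $0\leq j\leq n$, the $j$-th face of an $n$-simplex $\sigma$ ($n\geq 1$) is $\partial_j\sigma=\sigma\circ\lambda_j$, where $\lambda_j:\Delta^{n-1}\to\Delta^n$ is the affine map sending $e_0,\dots,e_{n-1}$ in order to $e_0,\dots,\widehat{e_j},\dots,e_n$. The border map $\partial:C^q_n(X)\to C^q_{n-1}(X)$ is the linear map $\partial=\sum_{j=0}^n q^j\partial_j$ for $n\ge1$, and $\partial=0$ on $C^q_0(X)$; one has $\partial^N=0$. Amplitude homology: for a graded module $M_*$ with a degree $-1$ endomorphism $\partial$ satisfying $\partial^N=0$, and $1\leq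 m\leq N-1$, $H_{m,n}(M)=\ker(\partial^m:M_n\to M_{n-m})/\operatorname{im}(\partial^{N-m}:M_{n+N-m}\to M_n)$. The $N$-complex $(\mathbb{Z}[q],[*]_q)$ has $\mathbb{Z}[q]$ in each degree $0\leq n\leq N-2$ and $0$ in all other degrees, with differential from degree $n$ to degree $n-1$ given by multiplication by $[n+1]_q$ for $1\leq n\leq N-2$ (and zero otherwise). The index map $\eta$ is the $\mathbb{Z}[q]$-linear graded map sending each singular $n$-simplex to $1\in\mathbb{Z}[q]$ in degree $n$ for $0\leq n\leq N-2$, and sending $C^q_n(X)$ to $0$ for $n\geq N-1$; it commutes with the differentials. *)

From HB Require Import structures.
From mathcomp Require Import all_boot all_order all_algebra.
From mathcomp Require Import boolp classical_sets reals topology normedtype.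
From mathcomp Require Import Rstruct Rstruct_topology.
From mathcomp Require Import complex.

Set Implicit Arguments.
Unset Strict Implicit.
Unset Printing Implicit Defensive.
Import Order.TTheory GRing.Theory Num.Theory.
Import numFieldNormedType.Exports.
Local Open Scope classical_set_scope.
Local Open Scope ring_scope.

Notation RR := Rdefinitions.R.
Notation CC := (complex.complex RR).

Definition inZq (q z : CC) : Prop :=
  exists p : {poly int}, z = (map_poly (fun k : int => k%:~R) p).[q].

Definition qnum (q : CC) (k : nat) : CC := \sum_(i < k) q ^+ i.

Definition stdsimplex (n : nat) : set 'rV[RR]_n.+1 :=
  [set x | (forall i, 0 <= x ord0 i) /\ \sum_i x ord0 i = 1].
Arguments stdsimplex : clear implicits.

(* lambda_j : Delta^(n-1) -> Delta^n, the affine (here: linear) map sending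
   e_0..e_(n-1) in order to e_0,..,^e_j,..,e_n (j : 'I_(n.+2), domain R^(n+1)). *)
Definition facemap (n : nat) (j : 'I_n.+2) (x : 'rV[RR]_n.+1) : 'rV[RR]_n.+2 :=
  \row_k (match unlift j k with Some k' => x ord0 k' | None => 0 end).

(* A singular n-simplex in X (X a subset of R^d) is a continuous map
   Delta^n -> X.  We represent it by a total function on R^(n+1) that is
   continuous on Delta^n, maps Delta^n into X, and is normalised to 0 outside
   Delta^n (so that singular simplices correspond bijectively to such
   functions). *)
Definition is_sing_simplex (d n : nat) (X : set 'rV[RR]_d)
    (f : 'rV[RR]_n.+1 -> 'rV[RR]_d) : Prop :=
  {within stdsimplex n, continuous f} /\
  (forall x, stdsimplex n x -> X (f x)) /\
  (forall x, ~ stdsimplex n x -> f x = 0).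

Definition simplex (d : nat) := {n : nat & 'rV[RR]_n.+1 -> 'rV[RR]_d}.
Definition sdeg d (s : simplex d) : nat := projT1 s.

Definition restrict (d n : nat) (g : 'rV[RR]_n.+1 -> 'rV[RR]_d) :
    'rV[RR]_n.+1 -> 'rV[RR]_d :=
  fun x => if `[< stdsimplex n x >] then g x else 0.

Definition face (d n : nat) (f : 'rV[RR]_n.+2 -> 'rV[RR]_d) (j : 'I_n.+2) :
    'rV[RR]_n.+1 -> 'rV[RR]_d :=
  restrict (fun x => f (facemap j x)).

(* A chain is a finite formal Z[q]-combination of simplices, presented as a
   list of (coefficient, simplex) pairs; two presentations denote the same
   element of the free module iff they have the same coefficient function. *)
Definition chain (d : nat) := seq (CC * simplex d).

Definition coef d (c : chain d) (s : simplex d) : CC :=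
  \sum_(p <- c) (if `[< p.2 = s >] then p.1 else 0).

Definition chain_eq d (c c' : chain d) : Prop := forall s, coef c s = coef c' s.

(* c presents an element of C^q_n(X), n an integer (C^q_n = 0 for n < 0) *)
Definition in_C (q : CC) (d : nat) (X : set 'rV[RR]_d) (n : int) (c : chain d)
  : Prop :=
  forall p, p \in c ->
    inZq q p.1 /\ (sdeg p.2)%:Z = n /\ is_sing_simplex X (projT2 p.2).

Definition bd_simplex (q : CC) d (a : CC) (s : simplex d) : chain d :=
  let: existT n f := s in
  match n return ('rV[RR]_n.+1 -> 'rV[RR]_d) -> chain d with
  | 0 => fun _ => [::]
  | n'.+1 => fun f =>
      [seq (a * q ^+ (nat_of_ord j), existT _ n' (face f j)) | j : 'I_n'.+2]
  end f.

Definition bd (q : CC) d (c : chain d) : chain d :=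
  flatten [seq bd_simplex q p.1 p.2 | p <- c].

Definition in_T (N : nat) (q : CC) (n : int) (a : CC) : Prop :=
  inZq q a /\ (~ (0 <= n <= (N - 2)%:Z)%R -> a = 0).

Definition tdiff (N : nat) (q : CC) (k : int) (a : CC) : CC :=
  if (1 <= k <= (N - 2)%:Z)%R then qnum q (absz k).+1 * a else 0.

Fixpoint tpow (N : nat) (q : CC) (m : nat) (n : int) (a : CC) : CC :=
  match m with
  | 0 => a
  | m'.+1 => tpow N q m' (n - 1) (tdiff N q n a)
  end.

Definition eta (N : nat) d (n : int) (c : chain d) : CC :=
  if (0 <= n <= (N - 2)%:Z)%R then \sum_(p <- c) p.1 else 0.

Definition C_cycle (q : CC) d (X : set 'rV[RR]_d) (m : nat) (n : int)
    (c : chain d) : Prop :=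
  in_C q X n c /\ chain_eq (iter m (@bd q d) c) [::].

Definition C_boundary (N : nat) (q : CC) d (X : set 'rV[RR]_d) (m : nat)
    (n : int) (c : chain d) : Prop :=
  in_C q X n c /\
  exists e, in_C q X (n + (N - m)%:Z) e /\ chain_eq (iter (N - m) (@bd q d) e) c.

Definition T_cycle (N : nat) (q : CC) (m : nat) (n : int) (a : CC) : Prop :=
  in_T N q n a /\ tpow N q m n a = 0.

Definition T_boundary (N : nat) (q : CC) (m : nat) (n : int) (a : CC) : Prop :=
  in_T N q n a /\
  exists b, in_T N q (n + (N - m)%:Z) b /\ tpow N q (N - m) (n + (N - m)%:Z) b = a.

(* The map H_{m,n}(C^q(X)) -> H_{m,n}(Z[q],[*]_q), [c] |-> [eta c], is
   bijective: injective (a cycle whose image is a boundary is a boundary) and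
   surjective (every cycle class is hit).  Z[q]-linearity and
   well-definedness are automatic since eta is a Z[q]-linear chain map. *)
Definition eta_homology_iso (N : nat) (q : CC) d (X : set 'rV[RR]_d)
    (m : nat) (n : int) : Prop :=
  (forall c, C_cycle q X m n c -> T_boundary N q m n (eta N n c) ->
     C_boundary N q X m n c) /\
  (forall a, T_cycle N q m n a ->
     exists c, C_cycle q X m n c /\ T_boundary N q m n (eta N n c - a)).

Definition convex_set d (X : set 'rV[RR]_d) : Prop :=
  forall x y (t : RR), X x -> X y -> 0 <= t <= 1 -> X (t *: x + (1 - t) *: y).

From Pilot Require Import Defs.
From HB Require Import structures.
From mathcomp Require Import all_boot all_order all_algebra.
From mathcomp Require Import boolp classical_sets reals topology normedtype.
From mathcomp Require Import Rstruct Rstruct_topology.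
From mathcomp Require Import complex.
From mathcomp Require Import ring lra zify.
Import Order.TTheory GRing.Theory Num.Theory Num.Def.
Local Open Scope classical_set_scope.
Local Open Scope ring_scope.
Set Implicit Arguments.
Unset Strict Implicit.
Unset Printing Implicit Defensive.

(* Fix a point x0 of X. Coning off with apex x0 gives an operator K on
   singular q-chains with  bd K c + q K bd c = c  in positive degrees and
   bd K c = c + q (augm c) x0  in degree 0, where augm is the sum of the
   coefficients. For a reduced cycle c (bd c = 0, and augm c = 0 in degree 0)
   this yields bd K^(j+1) c = [j+1]_q K^j c, hence bd^(N-1) K^(N-1) c =
   [N-1]_q! c. As N is prime, every [k]_q with 0 < k < N is a unit of Z[q],
   so reduced cycles are (N-1)-boundaries; an induction on the amplitude
   reduces every m-cycle killed by eta to this case. Surjectivity is realised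
   by multiples of the constant simplices at x0, on which bd acts exactly as
   the differential of (Z[q], [*]_q). *)

(** * Singular simplices in a convex set *)

Lemma rV_normE n (x : 'rV[RR]_n) : `|x| = \big[maxr/0]_ij `|x ij.1 ij.2|.
Proof. by rewrite [LHS]/normr /= mx_normrE. Qed.

Lemma rV_coord_le_norm n (x : 'rV[RR]_n) i : `|x ord0 i| <= `|x|.
Proof. by rewrite rV_normE; apply: (le_bigmax _ _ (ord0, i)). Qed.

Lemma rV_ballP n (x y : 'rV[RR]_n) e : 0 < e ->
  ball x e y <-> forall i, `|x ord0 i - y ord0 i| < e.
Proof.
move=> e0; rewrite -ball_normE /ball_ /= rV_normE; split.
  by move=> /bigmax_ltP [_ h] i; have := h (ord0, i) isT; rewrite !mxE.
move=> h; apply/bigmax_ltP; split => // -[i j] _ /=; rewrite !mxE (ord1 i).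
exact: h.
Qed.

Definition coord_continuous_at n d (A : set 'rV[RR]_n)
    (f : 'rV[RR]_n -> 'rV[RR]_d) (x : 'rV[RR]_n) :=
  forall e : RR, 0 < e -> exists2 del : RR, 0 < del &
    forall y, A y -> (forall i, `|x ord0 i - y ord0 i| < del) ->
      forall k, `|f x ord0 k - f y ord0 k| < e.

Definition coord_continuous_on n d (A : set 'rV[RR]_n) (f : 'rV[RR]_n -> 'rV[RR]_d) :=
  forall x, A x -> coord_continuous_at A f x.

Lemma within_continuousP n d (A : set 'rV[RR]_n) (f : 'rV[RR]_n -> 'rV[RR]_d) :
  {within A, continuous f} <-> coord_continuous_on A f.
Proof.
rewrite subspace_continuousP; split.
  move=> fc x Ax e e0; have /cvg_ballP/(_ e e0) := fc x Ax.
  rewrite /within /prop_near1 /= => /nbhs_ballP [del del0 hdel].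
  exists del => // y Ay xy k.
  by have /rV_ballP := hdel y ((rV_ballP _ _ del0).2 xy) Ay; apply.
move=> fc x Ax; apply/cvg_ballP => e e0.
have [del del0 hdel] := fc x Ax e e0.
rewrite /within /prop_near1 /=; apply/nbhs_ballP; exists del => // y /rV_ballP.
by move=> /(_ del0) xy Ay; apply/rV_ballP => //; apply: hdel.
Qed.

Lemma restrict_in d n (g : 'rV[RR]_n.+1 -> 'rV[RR]_d) x :
  stdsimplex n x -> Defs.restrict g x = g x.
Proof. by move=> h; rewrite /Defs.restrict asboolT. Qed.

Lemma restrict_out d n (g : 'rV[RR]_n.+1 -> 'rV[RR]_d) x :
  ~ stdsimplex n x -> Defs.restrict g x = 0.
Proof. by move=> h; rewrite /Defs.restrict asboolF. Qed.

Lemma stdsimplex_ge0 n x i : stdsimplex n x -> 0 <= x ord0 i.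
Proof. by case. Qed.

Lemma stdsimplex_le1 n x i : stdsimplex n x -> x ord0 i <= 1.
Proof.
move=> [x0 <-]; rewrite (bigD1 i) //= lerDl.
by apply: sumr_ge0 => k _; apply: x0.
Qed.

Lemma stdsimplex_bounded n : bounded_set (stdsimplex n).
Proof.
exists 1; split; first by rewrite num_real.
move=> M M1 x Dx /=; rewrite rV_normE; apply: le_trans (ltW M1).
apply/bigmax_leP; split => // -[i j] _ /=; rewrite (ord1 i).
by rewrite ger0_norm ?stdsimplex_le1 ?stdsimplex_ge0.
Qed.

Lemma eq0_if_small (a K : RR) : 0 < K ->
  (forall e : RR, 0 < e -> `|a| <= K * e) -> a = 0.
Proof.
move=> K0 small; apply/eqP; rewrite -normr_eq0; apply/negPn/negP => a0.
have ap : 0 < `|a| by rewrite lt_def a0 normr_ge0.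
have := small (`|a| / (2 * K)) (divr_gt0 ap (mulr_gt0 (ltr0Sn _ 1) K0)).
have -> : K * (`|a| / (2 * K)) = `|a| / 2 by field; rewrite gt_eqF.
lra.
Qed.

Lemma stdsimplex_closed n : closed (stdsimplex n).
Proof.
move=> x cx.
have near e : 0 < e ->
    exists y, stdsimplex n y /\ forall i, `|x ord0 i - y ord0 i| < e.
  move=> e0; have [y [Dy By]] := cx _ (nbhsx_ballx x e e0).
  by exists y; split => //; apply/rV_ballP.
split.
  move=> i; rewrite leNgt; apply/negP => xi.
  have [y [Dy hy]] := near (- x ord0 i) ltac:(lra).
  by have := hy i; have := stdsimplex_ge0 i Dy; rewrite ltr_norml; lra.
apply/eqP; rewrite -subr_eq0; apply/eqP; apply: (@eq0_if_small _ n.+1%:R) => // e e0.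
have [y [[_ Dy] hy]] := near e e0.
rewrite -{1}Dy -sumrB; apply: le_trans (ler_norm_sum _ _ _) _.
apply: (@le_trans _ _ (\sum_(i < n.+1) e)); first by apply: ler_sum => i _; apply: ltW.
by rewrite sumr_const card_ord mulr_natl.
Qed.

Lemma sing_simplex_bounded d n (X : set 'rV[RR]_d) (f : 'rV[RR]_n.+1 -> 'rV[RR]_d) :
  is_sing_simplex X f -> exists M : RR, 0 <= M /\ forall y k, `|f y ord0 k| <= M.
Proof.
move=> [fc [_ fout]].
have cpt : compact (f @` stdsimplex n).
  apply: continuous_compact => //; apply: bounded_closed_compact.
    exact: stdsimplex_bounded.
  exact: stdsimplex_closed.
have [M [Mr HM]] := compact_bounded cpt.
exists (`|M| + 1); split; first by rewrite addr_ge0.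
move=> y k; case: (pselect (stdsimplex n y)) => Dy; last first.
  by rewrite fout // mxE normr0 addr_ge0.
apply: le_trans (rV_coord_le_norm _ k) _.
apply: (HM (`|M| + 1)); last by exists y.
by apply: le_lt_trans (real_ler_norm Mr) _; rewrite ltrDl.
Qed.

Lemma facemap_skip n (j : 'I_n.+2) (x : 'rV[RR]_n.+1) : facemap j x ord0 j = 0.
Proof. by rewrite /facemap mxE unlift_none. Qed.

Lemma facemap_lift n (j : 'I_n.+2) (x : 'rV[RR]_n.+1) i :
  facemap j x ord0 (lift j i) = x ord0 i.
Proof. by rewrite /facemap mxE liftK. Qed.

Lemma facemap_stdsimplex n (j : 'I_n.+2) x :
  stdsimplex n x -> stdsimplex n.+1 (facemap j x).
Proof.
move=> [x0 x1]; split.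
  move=> k; case: (unliftP j k) => [i ->|->]; last by rewrite facemap_skip.
  by rewrite facemap_lift.
rewrite (bigD1_ord j) //= facemap_skip add0r -x1.
by apply: eq_bigr => i _; rewrite facemap_lift.
Qed.

Lemma facemap_close n (j : 'I_n.+2) (x y : 'rV[RR]_n.+1) (del : RR) : 0 < del ->
  (forall i, `|x ord0 i - y ord0 i| < del) ->
  forall k, `|facemap j x ord0 k - facemap j y ord0 k| < del.
Proof.
move=> del0 xy k; case: (unliftP j k) => [i ->|->]; first by rewrite !facemap_lift.
by rewrite !facemap_skip subrr normr0.
Qed.

Lemma face_sing_simplex d n (X : set 'rV[RR]_d) (f : 'rV[RR]_n.+2 -> 'rV[RR]_d) j :
  is_sing_simplex X f -> is_sing_simplex X (face f j).
Proof.
move=> [fc [fX fout]]; split; last split.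
- apply/within_continuousP => x Dx e e0.
  have Dfx := facemap_stdsimplex j Dx.
  have [del del0 hdel] := (within_continuousP _ _).1 fc _ Dfx e e0.
  exists del => // y Dy xy k; rewrite /face !restrict_in //.
  by apply: hdel; [apply: facemap_stdsimplex | apply: facemap_close].
- by move=> x Dx; rewrite /face restrict_in //; apply/fX/facemap_stdsimplex.
- by move=> x Dx; rewrite /face restrict_out.
Qed.

Definition const_map d n (x0 : 'rV[RR]_d) : 'rV[RR]_n.+1 -> 'rV[RR]_d :=
  Defs.restrict (fun _ => x0).

Lemma const_sing_simplex d n (X : set 'rV[RR]_d) x0 :
  X x0 -> is_sing_simplex X (@const_map d n x0).
Proof.
move=> Xx0; split; last split.
- apply/within_continuousP => x Dx e e0; exists 1 => // y Dy _ k.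
  by rewrite /const_map !restrict_in // subrr normr0.
- by move=> x Dx; rewrite /const_map restrict_in.
- by move=> x Dx; rewrite /const_map restrict_out.
Qed.

Lemma face_const d n (x0 : 'rV[RR]_d) j : face (@const_map d n.+1 x0) j = @const_map d n x0.
Proof.
apply/funext => x; rewrite /face /const_map.
case: (pselect (stdsimplex n x)) => Dx; last by rewrite !restrict_out.
by rewrite !restrict_in //; apply: facemap_stdsimplex.
Qed.

(* The cone on [f] with apex [x0] sends [s] to [s_0 x0 + (1 - s_0) f(s')],
   where [s'] is the tail of [s] rescaled to sum 1; at the apex [s_0 = 1] the
   junk value [s' = 0] is multiplied by [0]. The face opposite the apex is [f]. *)
Definition cone_tail n (s : 'rV[RR]_n.+2) : 'rV[RR]_n.+1 :=
  (1 - s ord0 ord0)^-1 *: \row_i s ord0 (lift ord0 i).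

Definition cone_map d n (x0 : 'rV[RR]_d) (f : 'rV[RR]_n.+1 -> 'rV[RR]_d) :
    'rV[RR]_n.+2 -> 'rV[RR]_d :=
  Defs.restrict (fun s => s ord0 ord0 *: x0 + (1 - s ord0 ord0) *: f (cone_tail s)).

Lemma cone_tailE n (s : 'rV[RR]_n.+2) i :
  cone_tail s ord0 i = s ord0 (lift ord0 i) / (1 - s ord0 ord0).
Proof. by rewrite !mxE mulrC. Qed.

Lemma cone_map_in d n (x0 : 'rV[RR]_d) f s k : stdsimplex n.+1 s ->
  cone_map x0 f s ord0 k =
  s ord0 ord0 * x0 ord0 k + (1 - s ord0 ord0) * f (cone_tail s) ord0 k.
Proof. by move=> Ds; rewrite /cone_map restrict_in // !mxE. Qed.

Lemma cone_tail_stdsimplex n (s : 'rV[RR]_n.+2) :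
  stdsimplex n.+1 s -> s ord0 ord0 != 1 -> stdsimplex n (cone_tail s).
Proof.
move=> Ds s1; have b0 : 0 < 1 - s ord0 ord0.
  by rewrite subr_gt0 lt_def eq_sym s1 stdsimplex_le1.
split=> [i|]; first by rewrite cone_tailE divr_ge0 ?(ltW b0) ?stdsimplex_ge0.
under eq_bigr do rewrite cone_tailE.
rewrite -mulr_suml; have := Ds.2; rewrite big_ord_recl => sum1.
have -> : \sum_i s ord0 (lift ord0 i) = 1 - s ord0 ord0 by rewrite -sum1; ring.
by rewrite divff ?gt_eqF.
Qed.

Lemma dist_quot_le (a b be be' del : RR) : 0 <= a <= 1 -> 0 < be <= 1 ->
  be / 2 <= be' -> `|a - b| < del -> `|be - be'| < del ->
  `|a / be - b / be'| <= 4 * del / (be * be).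
Proof.
move=> /andP[a0 a1] /andP[b0 b1] hb hab hbb.
have b'0 : 0 < be' by lra.
have -> : a / be - b / be' = (a * (be' - be) + be * (a - b)) / (be * be').
  by field; rewrite !gt_eqF.
rewrite normrM [`|(_ * _)^-1|]ger0_norm; last by rewrite invr_ge0 mulr_ge0 ?ltW.
have num_le : `|a * (be' - be) + be * (a - b)| <= 2 * del.
  apply: le_trans (ler_normD _ _) _.
  rewrite !normrM (ger0_norm a0) (ger0_norm (ltW b0)) distrC in hbb *.
  have := ler_wpM2r (normr_ge0 (be' - be)) a1.
  have := ler_wpM2r (normr_ge0 (a - b)) b1.
  lra.
have den_le : (be * be') ^-1 <= 2 / (be * be).
  rewrite -subr_ge0.
  have -> : 2 / (be * be) - (be * be')^-1 = (2 * be' - be) / (be * be * be').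
    by field; rewrite !gt_eqF.
  by apply: divr_ge0; [lra | rewrite !mulr_ge0 ?ltW].
apply: le_trans (ler_pM (normr_ge0 _) _ num_le den_le) _.
  by rewrite invr_ge0 mulr_ge0 ?ltW.
by rewrite le_eqVlt; apply/orP; left; apply/eqP; ring.
Qed.

Section ConeContinuity.
Variables (d n : nat) (X : set 'rV[RR]_d) (x0 : 'rV[RR]_d).
Variable f : 'rV[RR]_n.+1 -> 'rV[RR]_d.
Hypothesis f_sing : is_sing_simplex X f.
Variables (M : RR) (M_ge0 : 0 <= M) (f_bounded : forall y k, `|f y ord0 k| <= M).

Let K := `|x0| + M.

Let K_ge0 : 0 <= K.
Proof. by rewrite addr_ge0. Qed.

Let dist_apex_le y k : `|x0 ord0 k - f y ord0 k| <= K.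
Proof.
by apply: le_trans (ler_normB _ _) _; apply: lerD; [apply: rV_coord_le_norm|].
Qed.

(* Near the apex the cone collapses onto [x0]: the factor [1 - t_0] kills the
   bounded term, so continuity there needs only the bound on [f]. *)
Lemma cone_map_continuous_at_apex s : stdsimplex n.+1 s -> s ord0 ord0 = 1 ->
  coord_continuous_at (stdsimplex n.+1) (cone_map x0 f) s.
Proof.
move=> Ds s1 e e0; exists (e / (K + 1)); first by rewrite divr_gt0 ?ltr_wpDl.
move=> t Dt st k; rewrite !cone_map_in // s1.
have := st ord0; rewrite s1; set u := t ord0 ord0 => hu.
have -> : 1 * x0 ord0 k + (1 - 1) * f (cone_tail s) ord0 k -
    (u * x0 ord0 k + (1 - u) * f (cone_tail t) ord0 k) =
    (1 - u) * (x0 ord0 k - f (cone_tail t) ord0 k) by ring.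
have hK : e / (K + 1) * (K + 1) = e by field; rewrite gt_eqF ?ltr_wpDl.
have := dist_apex_le (cone_tail t) k.
rewrite normrM; have := normr_ge0 (1 - u).
have := normr_ge0 (x0 ord0 k - f (cone_tail t) ord0 k).
nra.
Qed.

Lemma cone_map_continuous_off_apex s : stdsimplex n.+1 s -> s ord0 ord0 != 1 ->
  coord_continuous_at (stdsimplex n.+1) (cone_map x0 f) s.
Proof.
move=> Ds s1 e e0; set be := 1 - s ord0 ord0.
have be0 : 0 < be by rewrite subr_gt0 lt_def eq_sym s1 stdsimplex_le1.
have be1 : be <= 1 by have := stdsimplex_ge0 ord0 Ds; rewrite /be; lra.
have Ds' := cone_tail_stdsimplex Ds s1.
have [df df0 hf] :=
  (within_continuousP _ _).1 f_sing.1 _ Ds' (e / 2) ltac:(by rewrite divr_gt0).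
pose del := minr (be / 2) (minr (df * (be * be) / 8) (e / (2 * (K + 1)))).
have del0 : 0 < del.
  have K1 : 0 < K + 1 by rewrite ltr_wpDl.
  by rewrite !lt_min !divr_gt0 ?mulr_gt0.
have del1 : del <= be / 2 by rewrite ge_min lexx.
have del2 : del <= df * (be * be) / 8 by rewrite !ge_min lexx orbT.
have del3 : del <= e / (2 * (K + 1)) by rewrite !ge_min lexx !orbT.
exists del => // t Dt st k; rewrite !cone_map_in //.
have := st ord0; set t0 := t ord0 ord0 => st0.
have bt : be / 2 <= 1 - t0 by move: st0 del1; rewrite ltr_norml /be; lra.
have t1 : t0 != 1 by apply/eqP => t01; move: bt; rewrite t01 subrr; lra.
have tail_close i : `|cone_tail s ord0 i - cone_tail t ord0 i| < df.
  rewrite !cone_tailE; apply: le_lt_trans (dist_quot_le _ _ bt (st _) _) _.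
  - by rewrite stdsimplex_ge0 ?stdsimplex_le1.
  - by rewrite be0 be1.
  - have -> : be - (1 - t0) = t0 - s ord0 ord0 by rewrite /be; ring.
    by rewrite distrC.
  rewrite ltr_pdivrMr ?mulr_gt0 //.
  have : df * (be * be) / 8 * 8 = df * (be * be) by field.
  nra.
have hfk := hf _ (cone_tail_stdsimplex Dt t1) tail_close k.
set fs := f (cone_tail s) ord0 k in hfk *; set ft := f (cone_tail t) ord0 k in hfk *.
have -> : s ord0 ord0 * x0 ord0 k + be * fs - (t0 * x0 ord0 k + (1 - t0) * ft) =
    (s ord0 ord0 - t0) * (x0 ord0 k - ft) + be * (fs - ft) by rewrite /be; ring.
apply: le_lt_trans (ler_normD _ _) _; rewrite !normrM.
have := dist_apex_le (cone_tail t) k; rewrite -/ft => hK.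
have hKe : e / (2 * (K + 1)) * (2 * (K + 1)) = e by field; rewrite gt_eqF ?ltr_wpDl.
rewrite (ger0_norm (ltW be0)).
have := normr_ge0 (s ord0 ord0 - t0); have := normr_ge0 (x0 ord0 k - ft).
have := normr_ge0 (fs - ft).
nra.
Qed.

End ConeContinuity.

Lemma cone_sing_simplex d n (X : set 'rV[RR]_d) x0 (f : 'rV[RR]_n.+1 -> 'rV[RR]_d) :
  convex_set X -> X x0 -> is_sing_simplex X f -> is_sing_simplex X (cone_map x0 f).
Proof.
move=> cX Xx0 fs; have [M [M0 HM]] := sing_simplex_bounded fs.
split; last split.
- apply/within_continuousP => s Ds.
  case: (eqVneq (s ord0 ord0) 1) => s1.
    exact: (cone_map_continuous_at_apex x0 M0 HM Ds s1).
  exact: (cone_map_continuous_off_apex x0 fs M0 HM Ds s1).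
- move=> s Ds; rewrite /cone_map restrict_in //.
  case: (eqVneq (s ord0 ord0) 1) => [->|s1].
    by rewrite subrr scale0r scale1r addr0.
  apply: cX => //; first by apply: fs.2.1; apply: cone_tail_stdsimplex.
  by rewrite stdsimplex_ge0 ?stdsimplex_le1.
- by move=> s Ds; rewrite /cone_map restrict_out.
Qed.

Lemma lift_lift_ord0 k (j : 'I_k.+1) : lift (lift ord0 j) ord0 = ord0 :> 'I_k.+2.
Proof. exact: val_inj. Qed.

Lemma lift_ord0_lift k (j : 'I_k.+2) (i : 'I_k.+1) :
  lift ord0 (lift j i) = lift (lift ord0 j) (lift ord0 i).
Proof. by apply: val_inj; rewrite /= /bump /= !add1n ltnS; case: (j <= i)%N. Qed.

Lemma cone_map_face0 d n x0 (f : 'rV[RR]_n.+1 -> 'rV[RR]_d) :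
  (forall x, ~ stdsimplex n x -> f x = 0) -> face (cone_map x0 f) ord0 = f.
Proof.
move=> fout; apply/funext => x; rewrite /face.
case: (pselect (stdsimplex n x)) => Dx; last by rewrite restrict_out // fout.
rewrite restrict_in // /cone_map restrict_in; last exact: facemap_stdsimplex.
have -> : cone_tail (facemap ord0 x) = x.
  by apply/rowP => i; rewrite cone_tailE facemap_lift facemap_skip subr0 divr1.
by rewrite facemap_skip subr0 scale1r scale0r add0r.
Qed.

Lemma cone_map_faceS d n x0 (f : 'rV[RR]_n.+2 -> 'rV[RR]_d) (j : 'I_n.+2) :
  face (cone_map x0 f) (lift ord0 j) = cone_map x0 (face f j).
Proof.
apply/funext => x; rewrite /face.
case: (pselect (stdsimplex n.+1 x)) => Dx; last first.
  by rewrite restrict_out // /cone_map restrict_out.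
rewrite restrict_in // /cone_map restrict_in; last exact: facemap_stdsimplex.
rewrite restrict_in //.
have coord0E : facemap (lift ord0 j) x ord0 ord0 = x ord0 ord0.
  by rewrite -[X in facemap _ _ _ X](lift_lift_ord0 j) facemap_lift.
have tailE : cone_tail (facemap (lift ord0 j) x) = facemap j (cone_tail x).
  apply/rowP => i; rewrite cone_tailE coord0E.
  case: (unliftP j i) => [i' ->|->]; last by rewrite !facemap_skip mul0r.
  by rewrite lift_ord0_lift !facemap_lift cone_tailE.
rewrite coord0E tailE.
case: (eqVneq (x ord0 ord0) 1) => [->|x1]; first by rewrite subrr !scale0r.
by rewrite restrict_in //; apply: cone_tail_stdsimplex.
Qed.

Lemma cone_map_face1 d x0 (f : 'rV[RR]_1 -> 'rV[RR]_d) :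
  face (cone_map x0 f) (lift ord0 ord0) = @const_map d 0 x0.
Proof.
apply/funext => x; rewrite /face /const_map.
case: (pselect (stdsimplex 0 x)) => Dx; last by rewrite !restrict_out.
rewrite !restrict_in // /cone_map restrict_in; last exact: facemap_stdsimplex.
have -> : facemap (lift ord0 ord0) x ord0 ord0 = 1.
  rewrite -[X in facemap _ _ _ X](lift_lift_ord0 ord0) facemap_lift.
  by have := Dx.2; rewrite big_ord1.
by rewrite subrr scale0r scale1r addr0.
Qed.

(** * Singular q-chains *)

Section ChainAlgebra.
Variable d : nat.
Implicit Types (c : chain d) (s : simplex d).

Definition scale_chain (a : CC) c : chain d := [seq (a * p.1, p.2) | p <- c].

Definition chain_sum (F : simplex d -> CC) c : CC := \sum_(p <- c) p.1 * F p.2.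

Definition augm c : CC := \sum_(p <- c) p.1.

Lemma coef_chain_nil s : coef [::] s = 0.
Proof. by rewrite /coef big_nil. Qed.

Lemma coef_chain_cons p c s : coef (p :: c) s = (if `[< p.2 = s >] then p.1 else 0) + coef c s.
Proof. by rewrite /coef big_cons. Qed.

Lemma coef_chain_cat c1 c2 s : coef (c1 ++ c2) s = coef c1 s + coef c2 s.
Proof. by rewrite /coef big_cat. Qed.

Lemma coef_chain_scale a c s : coef (scale_chain a c) s = a * coef c s.
Proof.
by rewrite /coef big_map mulr_sumr; apply: eq_bigr => p _ /=; case: ifP; rewrite ?mulr0.
Qed.

Lemma chain_sum_cat F c1 c2 : chain_sum F (c1 ++ c2) = chain_sum F c1 + chain_sum F c2.
Proof. by rewrite /chain_sum big_cat. Qed.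

Lemma chain_sum_scale F a c : chain_sum F (scale_chain a c) = a * chain_sum F c.
Proof. by rewrite /chain_sum big_map mulr_sumr; apply: eq_bigr => p _; rewrite mulrA. Qed.

(* Group the entries of [c] by the simplex of its head: that group contributes
   [coef c s * F s = 0], and the rest is a shorter chain with zero coefficients. *)
Lemma chain_sum_coef0 F c : (forall s, coef c s = 0) -> chain_sum F c = 0.
Proof.
elim: {c}(size c) {-2}c (leqnn (size c)) => [|k IH] [|p c] //=;
  try by rewrite /chain_sum big_nil.
move=> size_c c0; set P := fun r : CC * simplex d => `[< r.2 = p.2 >].
rewrite /chain_sum (bigID P) /=.
have -> : \sum_(r <- p :: c | P r) r.1 * F r.2 = coef (p :: c) p.2 * F p.2.
  rewrite /coef big_mkcond mulr_suml /=; apply: eq_bigr => r _.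
  by rewrite /P; case: asboolP => [->|]; rewrite ?mul0r.
rewrite c0 mul0r add0r -big_filter; apply: IH.
  rewrite size_filter /= {1}/P asboolT //= add0n.
  exact: leq_trans (count_size _ _) _.
move=> s; rewrite /coef big_filter.
case: (pselect (s = p.2)) => [->|s_p].
  by apply: big1 => r /negP rP; case: ifP => // /asboolP.
rewrite -[RHS](c0 s) /coef [RHS](bigID P) /= [X in _ = X + _]big1 ?add0r //.
move=> r /asboolP r_p.
by case: ifP => // /asboolP r_s; case: s_p; rewrite -r_s.
Qed.

Lemma chain_sum_eq F c c' : chain_eq c c' -> chain_sum F c = chain_sum F c'.
Proof.
move=> cc'; apply/eqP; rewrite -subr_eq0; apply/eqP.
have -> : chain_sum F c - chain_sum F c' = chain_sum F (c ++ scale_chain (-1) c').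
  by rewrite chain_sum_cat chain_sum_scale mulN1r.
by apply: chain_sum_coef0 => s; rewrite coef_chain_cat coef_chain_scale cc' mulN1r subrr.
Qed.

Lemma chain_eq_refl c : chain_eq c c.
Proof. by []. Qed.

Lemma chain_eq_trans c1 c2 c3 : chain_eq c1 c2 -> chain_eq c2 c3 -> chain_eq c1 c3.
Proof. by move=> h1 h2 s; rewrite h1 h2. Qed.

Lemma chain_eq_sym c c' : chain_eq c c' -> chain_eq c' c.
Proof. by move=> h s; rewrite h. Qed.

Lemma chain_eq_cat c1 c2 c1' c2' : chain_eq c1 c1' -> chain_eq c2 c2' ->
  chain_eq (c1 ++ c2) (c1' ++ c2').
Proof. by move=> h1 h2 s; rewrite !coef_chain_cat h1 h2. Qed.

Lemma chain_eq_scale a c c' : chain_eq c c' -> chain_eq (scale_chain a c) (scale_chain a c').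
Proof. by move=> h s; rewrite !coef_chain_scale h. Qed.

Lemma scale_chainA a b c :
  chain_eq (scale_chain a (scale_chain b c)) (scale_chain (a * b) c).
Proof. by move=> s; rewrite !coef_chain_scale mulrA. Qed.

Lemma scale1_chain c : chain_eq (scale_chain 1 c) c.
Proof. by move=> s; rewrite coef_chain_scale mul1r. Qed.

Lemma augm_cat c c' : augm (c ++ c') = augm c + augm c'.
Proof. by rewrite /augm big_cat. Qed.

Lemma augm1 a s : augm [:: (a, s)] = a.
Proof. by rewrite /augm big_cons big_nil addr0. Qed.

End ChainAlgebra.

(** * The ring Z[q] and q-numbers *)

Section ZqRing.
Variable q : CC.

Lemma inZq0 : inZq q 0.
Proof. by exists 0; rewrite rmorph0 horner0. Qed.

Lemma inZq1 : inZq q 1.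
Proof. by exists 1; rewrite rmorph1 hornerC. Qed.

Lemma inZqD x y : inZq q x -> inZq q y -> inZq q (x + y).
Proof. by move=> [p ->] [r ->]; exists (p + r); rewrite rmorphD hornerD. Qed.

Lemma inZqN x : inZq q x -> inZq q (- x).
Proof. by move=> [p ->]; exists (- p); rewrite rmorphN hornerN. Qed.

Lemma inZqM x y : inZq q x -> inZq q y -> inZq q (x * y).
Proof. by move=> [p ->] [r ->]; exists (p * r); rewrite rmorphM hornerM. Qed.

Lemma inZqXn k : inZq q (q ^+ k).
Proof. by exists 'X^k; rewrite rmorphXn /= map_polyX hornerXn. Qed.

Lemma inZq_sum (I : Type) (r : seq I) (P : pred I) (F : I -> CC) :
  (forall i, P i -> inZq q (F i)) -> inZq q (\sum_(i <- r | P i) F i).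
Proof. by move=> h; elim/big_ind: _ => //; [apply: inZq0 | apply: inZqD]. Qed.

End ZqRing.

Section QNumbers.
Variable q : CC.

Lemma qnum0 : qnum q 0 = 0.
Proof. by rewrite /qnum big_ord0. Qed.

Lemma qnumS k : qnum q k.+1 = qnum q k + q ^+ k.
Proof. by rewrite /qnum big_ord_recr. Qed.

Lemma qnum1 : qnum q 1 = 1.
Proof. by rewrite qnumS qnum0 add0r expr0. Qed.

Lemma qnumD a b : qnum q (a + b) = qnum q a + q ^+ a * qnum q b.
Proof.
elim: b => [|b IH]; first by rewrite addn0 qnum0 mulr0 addr0.
by rewrite addnS !qnumS IH mulrDr exprD addrA.
Qed.

Lemma qnumM a b : qnum q (a * b) = qnum q a * \sum_(i < b) q ^+ (a * i).
Proof.
elim: b => [|b IH]; first by rewrite muln0 qnum0 big_ord0 mulr0.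
by rewrite mulnS addnC qnumD IH big_ord_recr /=; ring.
Qed.

Lemma mul1Bq_qnum k : (1 - q) * qnum q k = 1 - q ^+ k.
Proof.
elim: k => [|k IH]; first by rewrite qnum0 mulr0 expr0 subrr.
by rewrite qnumS mulrDr IH exprS; ring.
Qed.

Definition qfact j := \prod_(i < j) qnum q i.+1.

Lemma qfactS j : qfact j.+1 = qfact j * qnum q j.+1.
Proof. by rewrite /qfact big_ord_recr. Qed.

Variable N : nat.
Hypotheses (N_prime : prime N) (qN : q ^+ N = 1) (q_neq1 : q != 1).

Lemma qnum_eq0 n : (N %| n)%N -> qnum q n = 0.
Proof.
have qnumN : qnum q N = 0.
  have := mul1Bq_qnum N; rewrite qN subrr => /eqP.
  by rewrite mulf_eq0 subr_eq0 eq_sym (negbTE q_neq1) => /eqP.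
by move=> /dvdnP [t ->]; rewrite mulnC qnumM qnumN mul0r.
Qed.

(* Bezout gives [a k = 1 + b N]; then [[a k]_q = 1 + q [b N]_q = 1], and
   [[a k]_q] is a multiple of [[k]_q]. *)
Lemma qnum_unit k : (0 < k < N)%N -> exists2 w, inZq q w & qnum q k * w = 1.
Proof.
move=> /andP [k0 kN].
have cop : coprime k N.
  rewrite coprime_sym prime_coprime //; apply/negP => /(dvdn_leq k0).
  by rewrite leqNgt kN.
have [a _] := Bezoutr k (prime_gt0 N_prime); rewrite (eqP cop) => akN.
have := qnum_eq0 akN; rewrite qnumD qnum1 expr1 mulnC qnumM.
set S := \sum_(i < a) _ => h.
exists (- (q * S)).
  by apply/inZqN/inZqM; [rewrite -[q]expr1 | apply: inZq_sum => i _]; apply: inZqXn.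
have -> : qnum q k * - (q * S) = 1 - (1 + q * (qnum q k * S)) by ring.
by rewrite h subr0.
Qed.

Lemma qfact_unit j : (j < N)%N -> exists2 u, inZq q u & qfact j * u = 1.
Proof.
elim: j => [|j IH] jN.
  by exists 1; [apply: inZq1 | rewrite /qfact big_ord0 mulr1].
have [u Zu uE] := IH (ltnW jN).
have [w Zw wE] := qnum_unit (k := j.+1) (ltac:(by rewrite ltn0Sn jN)).
by exists (u * w); [apply: inZqM | rewrite qfactS mulrACA uE wE mulr1].
Qed.

End QNumbers.

(** * The border map and the cone *)

Section Boundary.
Variables (q : CC) (d : nat).
Implicit Types (c : chain d) (s : simplex d).

Local Notation bd := (@bd q d).

Lemma bd_cat c c' : bd (c ++ c') = bd c ++ bd c'.
Proof. by rewrite /bd map_cat flatten_cat. Qed.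

Lemma coef_bd_simplex a s t :
  coef (bd_simplex q a s) t = a * coef (bd_simplex q 1 s) t.
Proof.
case: s => [[|n] f] /=; first by rewrite /coef !big_nil mulr0.
rewrite /coef !big_map mulr_sumr; apply: eq_bigr => j _ /=.
by case: ifP; rewrite ?mulr0 ?mul1r.
Qed.

Lemma coef_bd c t : coef (bd c) t = \sum_(p <- c) coef (bd_simplex q p.1 p.2) t.
Proof. by rewrite /coef /bd big_flatten big_map. Qed.

Lemma coef_bd_chain_sum c t :
  coef (bd c) t = chain_sum (fun s => coef (bd_simplex q 1 s) t) c.
Proof. by rewrite coef_bd; apply: eq_bigr => p _; rewrite coef_bd_simplex. Qed.

Lemma bd_eq c c' : chain_eq c c' -> chain_eq (bd c) (bd c').
Proof. by move=> cc' t; rewrite !coef_bd_chain_sum; apply: chain_sum_eq. Qed.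

Lemma bd_scale a c : chain_eq (bd (scale_chain a c)) (scale_chain a (bd c)).
Proof. by move=> t; rewrite coef_chain_scale !coef_bd_chain_sum chain_sum_scale. Qed.

Lemma iter_bd_cat k c c' : iter k bd (c ++ c') = iter k bd c ++ iter k bd c'.
Proof. by elim: k => //= k ->; rewrite bd_cat. Qed.

Lemma iter_bd_nil k : iter k bd [::] = [::].
Proof. by elim: k => //= k ->. Qed.

Lemma iter_bd_eq k c c' : chain_eq c c' -> chain_eq (iter k bd c) (iter k bd c').
Proof. by elim: k => //= k IH cc'; apply/bd_eq/IH. Qed.

Lemma iter_bd_scale k a c :
  chain_eq (iter k bd (scale_chain a c)) (scale_chain a (iter k bd c)).
Proof. by elim: k => //= k IH; apply: chain_eq_trans (bd_eq IH) (bd_scale _ _). Qed.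

End Boundary.

Section SingularChains.
Variables (q : CC) (d : nat) (X : set 'rV[RR]_d).
Implicit Types (c : chain d) (s : simplex d).

Local Notation bd := (@bd q d).

Lemma in_C_cat n c c' : in_C q X n c -> in_C q X n c' -> in_C q X n (c ++ c').
Proof. by move=> h h' p; rewrite mem_cat => /orP [/h|/h']. Qed.

Lemma in_C_scale n a c : inZq q a -> in_C q X n c -> in_C q X n (scale_chain a c).
Proof.
by move=> Za h p /mapP [p' /h [Zp' [deg sing]] ->]; split => //; apply: inZqM.
Qed.

Lemma in_C_deg (k : nat) c p : in_C q X k c -> p \in c -> projT1 p.2 = k.
Proof. by move=> h /h [_ [/eqP + _]]; rewrite eqz_nat => /eqP. Qed.

Lemma in_C_Negz (k : nat) c : in_C q X (Negz k) c -> c = [::].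
Proof. by case: c => // p c h; have [_ [+ _]] := h p (mem_head _ _). Qed.

Lemma in_C_bd (k : nat) c : in_C q X k.+1 c -> in_C q X k (bd c).
Proof.
move=> h p /flattenP [x /mapP [[a [n f]] pc ->]] px.
have [Za [_ fs]] := h _ pc; have /= nk := in_C_deg h pc; subst n.
move: px => /mapP [j _ ->]; split; first by apply/inZqM/inZqXn.
by split => //; apply: face_sing_simplex.
Qed.

Lemma in_C_iter_bd (k l : nat) c : in_C q X (k + l)%N c -> in_C q X k (iter l bd c).
Proof.
elim: l k => [|l IH] k /=; first by rewrite addn0.
by move=> h; apply/in_C_bd/IH; rewrite addSnnS.
Qed.

Lemma bd_deg0 c : in_C q X 0 c -> bd c = [::].
Proof.
elim: c => // -[a [n f]] c IH h; have /= n0 := in_C_deg h (mem_head _ _); subst n.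
by rewrite /bd /= -/(bd c) IH // => p pc; apply: h; rewrite inE pc orbT.
Qed.

Lemma inZq_augm n c : in_C q X n c -> inZq q (augm c).
Proof.
move=> h; rewrite /augm big_seq_cond; apply: inZq_sum => p /andP [pc _].
by have [] := h _ pc.
Qed.

Lemma augm_bd (k : nat) c : in_C q X k.+1 c -> augm (bd c) = qnum q k.+2 * augm c.
Proof.
move=> h; rewrite /augm /bd big_flatten big_map mulr_sumr.
apply: eq_big_seq => -[a [n f]] pc; have /= nk := in_C_deg h pc; subst n.
by rewrite /= big_map -/(index_enum _) -mulr_sumr mulrC /qnum big_enum.
Qed.

End SingularChains.

Section Cone.
Variables (q : CC) (d : nat) (X : set 'rV[RR]_d) (x0 : 'rV[RR]_d).
Hypotheses (X_convex : convex_set X) (Xx0 : X x0).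
Implicit Types (c : chain d) (s : simplex d).

Local Notation bd := (@bd q d).

Definition const_simplex (k : nat) : simplex d := existT _ k (@const_map d k x0).

Lemma in_C_const (k : nat) b : inZq q b -> in_C q X k [:: (b, const_simplex k)].
Proof.
move=> Zb p; rewrite inE => /eqP -> /=; split => //; split => //.
exact: const_sing_simplex.
Qed.

Lemma bd_const (k : nat) b :
  chain_eq (bd [:: (b, const_simplex k.+1)]) [:: (b * qnum q k.+2, const_simplex k)].
Proof.
move=> t; rewrite /bd /= cats0 /coef !big_map -/(index_enum _) big_cons big_nil addr0.
rewrite /const_simplex; under eq_bigr do rewrite face_const.
case: ifP => _; last by rewrite big1.
by rewrite /qnum mulr_sumr.
Qed.

Lemma iter_bd_const (k : nat) b :
  chain_eq (iter k bd [:: (b, const_simplex k)]) [:: (b * qfact q k.+1, const_simplex 0)].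
Proof.
elim: k b => [|k IH] b; first by rewrite /qfact big_ord1 qnum1 mulr1.
rewrite iterSr; apply: chain_eq_trans (iter_bd_eq _ _ (bd_const k b)) _.
by apply: chain_eq_trans (IH _) _; rewrite [qfact q k.+2]qfactS mulrAC mulrA.
Qed.

Definition cone_simplex s : simplex d := existT _ (projT1 s).+1 (cone_map x0 (projT2 s)).

Definition cone c : chain d := [seq (p.1, cone_simplex p.2) | p <- c].

Lemma coef_cone c t :
  coef (cone c) t = \sum_(p <- c) (if `[< cone_simplex p.2 = t >] then p.1 else 0).
Proof. by rewrite /coef big_map. Qed.

Lemma cone_scale a c : cone (scale_chain a c) = scale_chain a (cone c).
Proof. by rewrite /cone /scale_chain -!map_comp. Qed.

Lemma cone_eq c c' : chain_eq c c' -> chain_eq (cone c) (cone c').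
Proof.
move=> cc' t; rewrite !coef_cone.
have E c0 : \sum_(p <- c0) (if `[< cone_simplex p.2 = t >] then p.1 else 0)
    = chain_sum (fun s => if `[< cone_simplex s = t >] then 1 else 0) c0.
  by apply: eq_bigr => p _; case: ifP; rewrite ?mulr1 ?mulr0.
by rewrite !E; apply: chain_sum_eq.
Qed.

Lemma in_C_cone (k : nat) c : in_C q X k c -> in_C q X k.+1 (cone c).
Proof.
move=> h p /mapP [p' /h [Zp' [deg sing]] ->]; split => //; split.
  by move: deg; rewrite /sdeg /= => /eqP; rewrite eqz_nat => /eqP ->.
exact: cone_sing_simplex.
Qed.

Lemma in_C_iter_cone (k j : nat) c :
  in_C q X k c -> in_C q X (k + j)%N (iter j cone c).
Proof.
move=> h; elim: j => [|j IH]; first by rewrite addn0.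
by rewrite addnS; apply: in_C_cone.
Qed.

Lemma coef_bd_cone_simplex n (f : 'rV[RR]_n.+2 -> 'rV[RR]_d) a t :
  (forall x, ~ stdsimplex n.+1 x -> f x = 0) ->
  coef (bd_simplex q a (cone_simplex (existT _ n.+1 f))) t =
  (if `[< existT _ n.+1 f = t >] then a else 0) +
  q * coef (cone (bd_simplex q a (existT _ n.+1 f))) t.
Proof.
move=> fout; rewrite /= /cone /coef !big_map -!/(index_enum _) big_ord_recl /=.
rewrite cone_map_face0 // expr0 mulr1 mulr_sumr; congr (_ + _).
apply: eq_bigr => j _; rewrite /cone_simplex /= cone_map_faceS.
by case: ifP; rewrite ?mulr0 // exprS mulrCA.
Qed.

Lemma coef_bd_cone_simplex0 (f : 'rV[RR]_1 -> 'rV[RR]_d) a t :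
  (forall x, ~ stdsimplex 0 x -> f x = 0) ->
  coef (bd_simplex q a (cone_simplex (existT _ 0%N f))) t =
  (if `[< existT _ 0%N f = t >] then a else 0) +
  (if `[< const_simplex 0 = t >] then a * q else 0).
Proof.
move=> fout; rewrite /= /coef !big_map -!/(index_enum _) big_ord_recl /=.
by rewrite cone_map_face0 // expr0 mulr1 big_ord1 /= cone_map_face1 expr1.
Qed.

Lemma bd_cone (k : nat) c : in_C q X k.+1 c ->
  chain_eq (bd (cone c)) (c ++ scale_chain q (cone (bd c))).
Proof.
move=> h t; rewrite coef_bd coef_chain_cat coef_chain_scale.
have -> : coef (cone (bd c)) t = \sum_(p <- c) coef (cone (bd_simplex q p.1 p.2)) t.
  by rewrite coef_cone /bd big_flatten big_map; apply: eq_bigr => p _; rewrite coef_cone.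
rewrite /cone big_map [coef c t]/coef mulr_sumr -big_split /=.
apply: eq_big_seq => -[a [n f]] pc; have /= nk := in_C_deg h pc; subst n.
by have [_ [_ [_ [_ fout]]]] := h _ pc; apply: coef_bd_cone_simplex.
Qed.

Lemma bd_cone0 c : in_C q X 0 c ->
  chain_eq (bd (cone c)) (c ++ [:: (q * augm c, const_simplex 0)]).
Proof.
move=> h t; rewrite coef_bd coef_chain_cat coef_chain_cons coef_chain_nil addr0 /cone big_map.
rewrite [coef c t]/coef /augm /= mulr_sumr.
have -> : (if `[< const_simplex 0 = t >] then \sum_(p <- c) q * p.1 else 0) =
    \sum_(p <- c) (if `[< const_simplex 0 = t >] then p.1 * q else 0).
  by case: ifP => _; [apply: eq_bigr => p _; rewrite mulrC | rewrite big1].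
rewrite -big_split /=; apply: eq_big_seq => -[a [n f]] pc.
have /= nk := in_C_deg h pc; subst n.
by have [_ [_ [_ [_ fout]]]] := h _ pc; apply: coef_bd_cone_simplex0.
Qed.

End Cone.

(** * Amplitude homology *)

Section ReducedCycles.
Variables (q : CC) (d : nat) (X : set 'rV[RR]_d) (x0 : 'rV[RR]_d).
Hypotheses (X_convex : convex_set X) (Xx0 : X x0).

Local Notation bd := (@bd q d).
Local Notation K := (cone x0).

Variables (k : nat) (c : chain d).
Hypotheses (c_deg : in_C q X k c) (c_cycle : chain_eq (bd c) [::]).
Hypothesis c_augm : k = 0%N -> augm c = 0.

Lemma bd_iter_cone j : chain_eq (bd (iter j.+1 K c)) (scale_chain (qnum q j.+1) (iter j K c)).
Proof.
elim: j => [|j IH] /=.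
  rewrite qnum1; apply: chain_eq_trans (chain_eq_sym (scale1_chain c)).
  case: k c_deg c_augm => [|k'] h h0.
    apply: chain_eq_trans (bd_cone0 x0 h) _; rewrite h0 // mulr0 => t.
    by rewrite coef_chain_cat coef_chain_cons coef_chain_nil /=; case: ifP; rewrite !addr0.
  apply: chain_eq_trans (bd_cone x0 h) _.
  apply: chain_eq_trans (chain_eq_cat (chain_eq_refl c) (chain_eq_scale q (cone_eq x0 c_cycle))) _.
  by rewrite /= cats0.
have h : in_C q X (k + j).+1 (iter j.+1 K c) by rewrite -addnS; apply: in_C_iter_cone.
apply: chain_eq_trans (bd_cone x0 h) _.
apply: chain_eq_trans (chain_eq_cat (chain_eq_refl _) (chain_eq_scale q (cone_eq x0 IH))) _.
rewrite cone_scale /=.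
apply: chain_eq_trans (chain_eq_cat (chain_eq_refl _) (scale_chainA _ _ _)) _.
move=> t; rewrite coef_chain_cat !coef_chain_scale (qnumD q 1 j.+1) qnum1 expr1.
by rewrite mulrDl mul1r.
Qed.

Lemma iter_bd_iter_cone j : chain_eq (iter j bd (iter j K c)) (scale_chain (qfact q j) c).
Proof.
elim: j => [|j IH]; first by rewrite /qfact big_ord0; apply: chain_eq_sym; apply: scale1_chain.
rewrite iterSr; apply: chain_eq_trans (iter_bd_eq _ _ (bd_iter_cone j)) _.
apply: chain_eq_trans (iter_bd_scale _ _ _ _) _.
apply: chain_eq_trans (chain_eq_scale _ IH) _.
by apply: chain_eq_trans (scale_chainA _ _ _) _; rewrite qfactS mulrC.
Qed.

(* Since [[N-1]_q!] is invertible in [Z[q]], [c = bd^(N-1) ([N-1]_q!^-1 K^(N-1) c)]. *)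
Lemma reduced_cycle_boundary N : prime N -> q ^+ N = 1 -> q != 1 ->
  exists2 e, in_C q X (k + (N - 1))%N e & chain_eq (iter (N - 1) bd e) c.
Proof.
move=> N_prime qN q1.
have N1 : (N - 1 < N)%N by rewrite subn1 ltn_predL prime_gt0.
have [u Zu uE] := qfact_unit N_prime qN q1 N1.
exists (scale_chain u (iter (N - 1) K c)); first by apply: in_C_scale => //; apply: in_C_iter_cone.
apply: chain_eq_trans (iter_bd_scale _ _ _ _) _.
apply: chain_eq_trans (chain_eq_scale _ (iter_bd_iter_cone _)) _.
by apply: chain_eq_trans (scale_chainA _ _ _) _; rewrite mulrC uE; apply: scale1_chain.
Qed.

End ReducedCycles.

Section AmplitudeInduction.
Variables (N : nat) (q : CC) (d : nat) (X : set 'rV[RR]_d) (x0 : 'rV[RR]_d).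
Hypotheses (N_prime : prime N) (qN : q ^+ N = 1) (q_neq1 : q != 1).
Hypotheses (X_convex : convex_set X) (Xx0 : X x0).

Local Notation bd := (@bd q d).

Lemma const_simplex_boundary (r : nat) a : (r < N.-1)%N -> inZq q a ->
  exists2 e, in_C q X r e & chain_eq (iter r bd e) [:: (a, const_simplex x0 0)].
Proof.
move=> rN Za; have [w Zw wE] := qfact_unit N_prime qN q_neq1 (j := r.+1) ltac:(lia).
exists [:: (a * w, const_simplex x0 r)]; first exact/in_C_const/inZqM.
apply: chain_eq_trans (iter_bd_const _ _ _ _) _.
by rewrite -mulrA [w * _]mulrC wE mulr1.
Qed.

(* [c - (augm c) x0] is a reduced cycle, [(augm c) x0] the boundary of a
   constant simplex. *)
Lemma deg0_chain_boundary (r : nat) c : (r < N.-1)%N -> in_C q X 0 c ->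
  exists2 e, in_C q X r e & chain_eq (iter r bd e) c.
Proof.
move=> rN c_deg; have Zaugm := inZq_augm c_deg.
pose c0 := c ++ [:: (- augm c, const_simplex x0 0)].
have c0_deg : in_C q X 0 c0 by apply: in_C_cat c_deg (in_C_const Xx0 (inZqN Zaugm)).
have [e0 e0_deg e0E] : exists2 e0, in_C q X (0 + (N - 1))%N e0 &
    chain_eq (iter (N - 1) bd e0) c0.
  apply: (reduced_cycle_boundary X_convex Xx0 c0_deg) => //.
    by rewrite (bd_deg0 c0_deg).
  by move=> _; rewrite augm_cat augm1 subrr.
have [e1 e1_deg e1E] := const_simplex_boundary rN Zaugm.
exists (iter (N - 1 - r) bd e0 ++ e1).
  by apply: in_C_cat e1_deg; apply: in_C_iter_bd; congr in_C: e0_deg; lia.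
rewrite iter_bd_cat -iterD subnKC; last by lia.
move=> t; rewrite coef_chain_cat e0E e1E /c0 coef_chain_cat.
by rewrite !coef_chain_cons coef_chain_nil /=; case: ifP => _; rewrite ?addr0 ?subrK.
Qed.

(* Induction on [m]: in positive degree the induction hypothesis gives
   [bd c = bd^(N-m-1) e1], and [c - bd^(N-m-2) e1] is a reduced cycle. *)
Lemma amplitude_cycle_boundary m : (m.+1 < N)%N -> forall (k : nat) c,
  in_C q X k c -> chain_eq (iter m.+1 bd c) [::] -> (k = m -> augm c = 0) ->
  exists2 e, in_C q X (k + (N - m.+1))%N e & chain_eq (iter (N - m.+1) bd e) c.
Proof.
elim: m => [|m IH] mN k c c_deg c_cycle c_augm.
  exact: (reduced_cycle_boundary X_convex Xx0 c_deg c_cycle c_augm N_prime qN q_neq1).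
set r := (N - m.+2)%N.
case: k c_deg c_cycle c_augm => [|k] c_deg c_cycle c_augm.
  by rewrite add0n; apply: deg0_chain_boundary c_deg; rewrite /r; lia.
have bd_deg := in_C_bd c_deg.
have [e1 e1_deg e1E] : exists2 e1, in_C q X (k + (N - m.+1))%N e1 &
    chain_eq (iter (N - m.+1) bd e1) (bd c).
  apply: IH => //; first lia; first by rewrite -iterSr.
  by move=> km; rewrite (augm_bd c_deg) c_augm ?km ?mulr0.
set y := iter r bd e1.
have y_deg : in_C q X k.+1 y by apply: in_C_iter_bd; congr in_C: e1_deg; rewrite /r; lia.
have c1_deg : in_C q X k.+1 (c ++ scale_chain (-1) y).
  by apply: in_C_cat c_deg (in_C_scale (inZqN (inZq1 q)) y_deg).
have [e2 e2_deg e2E] : exists2 e2, in_C q X (k.+1 + (N - 1))%N e2 &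
    chain_eq (iter (N - 1) bd e2) (c ++ scale_chain (-1) y).
  apply: (reduced_cycle_boundary X_convex Xx0 c1_deg) => //.
  rewrite bd_cat; apply: chain_eq_trans (chain_eq_cat (chain_eq_refl _) (bd_scale _ _ _)) _.
  have -> : bd y = iter (N - m.+1) bd e1.
    by have -> : (N - m.+1 = r.+1)%N by rewrite /r; lia.
  by move=> t; rewrite coef_chain_cat coef_chain_scale e1E coef_chain_nil mulN1r subrr.
exists (e1 ++ iter m.+1 bd e2).
  apply: in_C_cat; first by congr in_C: e1_deg; rewrite /r; lia.
  by apply: in_C_iter_bd; congr in_C: e2_deg; rewrite /r; lia.
rewrite iter_bd_cat -iterD; have -> : (r + m.+1 = N - 1)%N by rewrite /r; lia.
by move=> t; rewrite !coef_chain_cat e2E coef_chain_cat coef_chain_scale; ring.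
Qed.

End AmplitudeInduction.

Lemma tpow0 N q j (n : int) : tpow N q j n 0 = 0.
Proof. by elim: j n => [|j IH] n //=; rewrite /tdiff; case: ifP; rewrite ?mulr0 IH. Qed.

Lemma T_boundary0 N q m n : T_boundary N q m n 0.
Proof.
split; first by split => //; apply: inZq0.
by exists 0; split; [split => //; apply: inZq0 | apply: tpow0].
Qed.

Lemma iter_bd_const_tpow N q d (x0 : 'rV[RR]_d) j (k : nat) a : (j <= k <= N - 2)%N ->
  chain_eq (iter j (@bd q d) [:: (a, const_simplex x0 k)])
    [:: (tpow N q j k a, const_simplex x0 (k - j))].
Proof.
elim: j k a => [|j IH] k a; first by rewrite subn0.
case: k => // k /andP [jk kN]; rewrite iterSr.
apply: chain_eq_trans (iter_bd_eq _ _ (bd_const q x0 k a)) _.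
apply: chain_eq_trans (IH _ _ _) _; first by apply/andP; split; lia.
rewrite subSS [tpow _ _ j.+1 _ _]/=.
have -> : Posz k.+1 - 1 = k by rewrite -addn1 PoszD addrK.
rewrite /tdiff ifT; first by rewrite mulrC.
by rewrite !lez_nat; apply/andP; split; lia.
Qed.

Section IndexMap.
Variables (N : nat) (q : CC) (d : nat) (X : set 'rV[RR]_d) (x0 : 'rV[RR]_d).
Hypothesis Xx0 : X x0.
Variables (m : nat) (n : int).

Lemma eta_homology_inj : prime N -> q ^+ N = 1 -> q != 1 -> convex_set X ->
    (0 < m < N)%N -> forall c,
  C_cycle q X m n c -> T_boundary N q m n (Defs.eta N n c) -> C_boundary N q X m n c.
Proof.
move=> N_prime qN q_neq1 X_convex /andP [m_gt0 m_lt] c [c_deg c_cycle] [_ [b [b_deg bE]]].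
split => //; case: n c_deg b_deg bE => [k|k] c_deg b_deg bE; last first.
  by rewrite (in_C_Negz c_deg); exists [::]; split => //; rewrite iter_bd_nil.
case: m m_gt0 m_lt c_cycle b_deg bE => // m' _ mN c_cycle b_deg bE.
(* In degree [m' = m - 1] the preimage [b] lives in degree [N - 1], where the
   target complex is zero. *)
have c_augm : k = m' -> augm c = 0.
  move=> km; subst k; move: bE; rewrite (b_deg.2 _) ?tpow0 /Defs.eta.
    by rewrite ifT // !lez_nat; lia.
  by rewrite -PoszD !lez_nat; lia.
have [e e_deg eE] := amplitude_cycle_boundary N_prime qN q_neq1 X_convex Xx0 mN c_deg
  c_cycle c_augm.
by exists e; split => //; rewrite -PoszD.
Qed.

Lemma eta_homology_surj a : T_cycle N q m n a ->
  exists c, C_cycle q X m n c /\ T_boundary N q m n (Defs.eta N n c - a).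
Proof.
move=> [[Za a_deg] a_cycle].
have [n_range|n_out] := boolP (0 <= n <= (N - 2)%:Z); last first.
  rewrite a_deg; last by move=> n_in; rewrite n_in in n_out.
  exists [::]; split; first by split => //; rewrite iter_bd_nil.
  by rewrite /Defs.eta; case: ifP => _; rewrite ?big_nil subr0; apply: T_boundary0.
case: n n_range a_deg a_cycle => [k|//] n_range a_deg a_cycle.
have kN : (k <= N - 2)%N by move: n_range; rewrite !lez_nat.
exists [:: (a, const_simplex x0 k)]; split; last first.
  by rewrite /Defs.eta n_range big_cons big_nil addr0 subrr; apply: T_boundary0.
split; first exact: in_C_const.
have [mk|km] := leqP m k.
  have mkN : (m <= k <= N - 2)%N by rewrite mk.
  apply: chain_eq_trans (iter_bd_const_tpow q x0 a mkN) _.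
  by rewrite a_cycle => t; rewrite coef_chain_cons coef_chain_nil /=; case: ifP; rewrite addr0.
rewrite -(subnK (ltnW km)) iterD.
have kkN : (k <= k <= N - 2)%N by rewrite leqnn.
apply: chain_eq_trans (iter_bd_eq _ _ (iter_bd_const_tpow q x0 a kkN)) _.
rewrite subnn; case: (m - k)%N (ltac:(lia) : (0 < m - k)%N) => // r _.
by rewrite iterSr iter_bd_nil.
Qed.

End IndexMap.

Theorem theorem5p2 (N : nat) (q : complex.complex Rdefinitions.R)
    (X : set 'rV[Rdefinitions.R]_(N.-1)) :
  prime N -> (3 <= N)%N -> q ^+ N = 1 -> q != 1 ->
  X !=set0 -> convex_set X ->
  forall (m : nat) (n : int), (1 <= m <= N.-1)%N ->
    eta_homology_iso N q X m n.
Proof.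
move=> N_prime _ qN q_neq1 [x0 Xx0] X_convex m n /andP [m_gt0 m_le].
have m_range : (0 < m < N)%N by rewrite m_gt0 -(prednK (prime_gt0 N_prime)) ltnS.
split; first exact: (eta_homology_inj Xx0).
exact: (eta_homology_surj Xx0).
Qed.
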